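(* Let $\mathcal{C}$ be a category and let $(S,\pi_0,\pi_1,\sigma)$ be a pre-summability structure on $\mathcal{C}$. Let $Z,Y$ be objects and $f_0,f_1,g_0,g_1:Z\to Y$ morphisms such that $(f_0,f_1)$ and $(g_0,g_1)$ are summable, and such that the witnesses $\langle f_0,f_1\rangle,\langle g_0,g_1\rangle : Z\to SY$ are themselves summable. Then for each $i\in\{0,1\}$ the pair $(f_i,g_i)$ is summable, the pair $(f_0+g_0,\,f_1+g_1)$ is summable, and $$\langle f_0,f_1\rangle+\langle g_0,g_1\rangle=\langle f_0+g_0,\;f_1+g_1\rangle .$$
   Context: Assume that for every pair of objects $X,Y$ of $\mathcal{C}$ a distinguished morphism $0_{X,Y}\in\mathcal{C}(X,Y)$ is given. A pre-summability structure on $\mathcal{C}$ is a tuple $(S,\pi_0,\pi_1,\sigma)$ consisting of the following data. First, an endofunctor $S:\mathcal{C}\to\mathcal{C}$ with $S(0_{X,Y})=0_{SX,SY}$ for all $X,Y$. Second, natural transformations $\pi_0,\pi_1,\sigma:S\Rightarrow \mathrm{Id}$. The projections $\pi_0,\pi_1$ must be jointly monic: for $f,g:Y\to SX$, if $\pi_0\circ f=\pi_0\circ g$ and $\pi_1\circ f=\pi_1\circ g$ then $f=g$. Two morphisms $f_0,f_1:X\to Y$ are called summable if there exists $h:X\to SY$ with $\pi_0\circ h=f_0$ and $\pi_1\circ h=f_1$. Such an $h$ is unique by joint monicity; it is called the witness and is written $\langle f_0,f_1\rangle$. In that case the sum is defined as $f_0+f_1:=\sigma_Y\circ\langle f_0,f_1\rangle$.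 *)

From Stdlib Require Import ClassicalEpsilon.

Set Implicit Arguments.
Unset Strict Implicit.

Record Category := {
  Obj :> Type;
  Hom : Obj -> Obj -> Type;
  idm : forall X, Hom X X;
  comp : forall X Y Z, Hom Y Z -> Hom X Y -> Hom X Z;
  comp_assoc : forall X Y Z W (h : Hom Z W) (g : Hom Y Z) (f : Hom X Y),
      comp h (comp g f) = comp (comp h g) f;
  comp_id_l : forall X Y (f : Hom X Y), comp (idm Y) f = f;
  comp_id_r : forall X Y (f : Hom X Y), comp f (idm X) = f
}.

Arguments Hom {c} X Y.
Arguments idm {c} X.
Arguments comp {c X Y Z} g f.

Record PreSumStruct (C : Category) := {
  zero : forall X Y : C, Hom X Y;
  S_obj : C -> C;
  S_hom : forall X Y : C, Hom X Y -> Hom (S_obj X) (S_obj Y);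
  S_id : forall X : C, S_hom (idm X) = idm (S_obj X);
  S_comp : forall (X Y Z : C) (g : Hom Y Z) (f : Hom X Y),
      S_hom (comp g f) = comp (S_hom g) (S_hom f);
  S_zero : forall X Y : C, S_hom (zero X Y) = zero (S_obj X) (S_obj Y);
  pi0 : forall X : C, Hom (S_obj X) X;
  pi1 : forall X : C, Hom (S_obj X) X;
  sigma : forall X : C, Hom (S_obj X) X;
  pi0_nat : forall (X Y : C) (f : Hom X Y), comp f (pi0 X) = comp (pi0 Y) (S_hom f);
  pi1_nat : forall (X Y : C) (f : Hom X Y), comp f (pi1 X) = comp (pi1 Y) (S_hom f);
  sigma_nat : forall (X Y : C) (f : Hom X Y),
      comp f (sigma X) = comp (sigma Y) (S_hom f);
  pi_jointly_monic : forall (X Y : C) (f g : Hom Y (S_obj X)),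
      comp (pi0 X) f = comp (pi0 X) g -> comp (pi1 X) f = comp (pi1 X) g -> f = g
}.

Arguments zero {C} p X Y.
Arguments S_obj {C} p X.
Arguments S_hom {C} p {X Y} f.
Arguments pi0 {C} p X.
Arguments pi1 {C} p X.
Arguments sigma {C} p X.

Section Summability.
Variables (C : Category) (P : PreSumStruct C).

Definition summable (X Y : C) (f0 f1 : Hom X Y) : Prop :=
  exists h : Hom X (S_obj P Y), comp (pi0 P Y) h = f0 /\ comp (pi1 P Y) h = f1.

(* The witness <f0,f1> (unique by joint monicity when f0,f1 are summable;
   an arbitrary morphism otherwise -- only used under summability). *)
Definition witness (X Y : C) (f0 f1 : Hom X Y) : Hom X (S_obj P Y) :=
  epsilon (inhabits (zero P X (S_obj P Y)))
    (fun h => comp (pi0 P Y) h = f0 /\ comp (pi1 P Y) h = f1).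

Definition sum (X Y : C) (f0 f1 : Hom X Y) : Hom X Y :=
  comp (sigma P Y) (witness f0 f1).

End Summability.

Arguments summable {C} P {X Y} f0 f1.
Arguments witness {C} P {X Y} f0 f1.
Arguments sum {C} P {X Y} f0 f1.

(* Postcomposition with any morphism preserves summability and sums: S f o <h0,h1>
   witnesses (f h0, f h1), and naturality of sigma gives f (h0 + h1) = f h0 + f h1.
   Applied to the projections pi_0, pi_1 of S Y and to <<f0,f1>,<g0,g1>>, this shows
   that pi_i o (<f0,f1> + <g0,g1>) = f_i + g_i, so <f0,f1> + <g0,g1> is the witness
   of (f0 + g0, f1 + g1). *)
From Stdlib Require Import ClassicalEpsilon.

Section Summability.
Context {C : Category} {P : PreSumStruct C}.

Lemma witness_spec {X Y : C} {h0 h1 : Hom X Y} :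
  summable P h0 h1 ->
  comp (pi0 P Y) (witness P h0 h1) = h0 /\ comp (pi1 P Y) (witness P h0 h1) = h1.
Proof. intros Hh. exact (epsilon_spec _ _ Hh). Qed.

Lemma witness_unique {X Y : C} {h0 h1 : Hom X Y} (h : Hom X (S_obj P Y)) :
  comp (pi0 P Y) h = h0 -> comp (pi1 P Y) h = h1 -> witness P h0 h1 = h.
Proof.
  intros E0 E1.
  destruct (witness_spec (ex_intro _ h (conj E0 E1))) as [W0 W1].
  apply pi_jointly_monic; congruence.
Qed.

Lemma pi0_comp_S_hom {X Y Y' : C} (f : Hom Y Y') (h : Hom X (S_obj P Y)) :
  comp (pi0 P Y') (comp (S_hom P f) h) = comp f (comp (pi0 P Y) h).
Proof. rewrite comp_assoc, <- pi0_nat, comp_assoc. reflexivity. Qed.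

Lemma pi1_comp_S_hom {X Y Y' : C} (f : Hom Y Y') (h : Hom X (S_obj P Y)) :
  comp (pi1 P Y') (comp (S_hom P f) h) = comp f (comp (pi1 P Y) h).
Proof. rewrite comp_assoc, <- pi1_nat, comp_assoc. reflexivity. Qed.

Lemma summable_comp_l {X Y Y' : C} (f : Hom Y Y') {h0 h1 : Hom X Y} :
  summable P h0 h1 -> summable P (comp f h0) (comp f h1).
Proof.
  intros Hh. destruct (witness_spec Hh) as [W0 W1].
  exists (comp (S_hom P f) (witness P h0 h1)).
  rewrite pi0_comp_S_hom, pi1_comp_S_hom, W0, W1. split; reflexivity.
Qed.

Lemma witness_comp_l {X Y Y' : C} (f : Hom Y Y') {h0 h1 : Hom X Y} :
  summable P h0 h1 ->
  witness P (comp f h0) (comp f h1) = comp (S_hom P f) (witness P h0 h1).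
Proof.
  intros Hh. destruct (witness_spec Hh) as [W0 W1].
  apply witness_unique; rewrite ?pi0_comp_S_hom, ?pi1_comp_S_hom, ?W0, ?W1; reflexivity.
Qed.

Lemma sum_comp_l {X Y Y' : C} (f : Hom Y Y') {h0 h1 : Hom X Y} :
  summable P h0 h1 -> sum P (comp f h0) (comp f h1) = comp f (sum P h0 h1).
Proof.
  intros Hh. unfold sum.
  rewrite (witness_comp_l f Hh), !comp_assoc, sigma_nat. reflexivity.
Qed.

End Summability.

Theorem mainTheorem1 (C : Category) (P : PreSumStruct C) (Z Y : C)
    (f0 f1 g0 g1 : Hom Z Y) :
  summable P f0 f1 -> summable P g0 g1 ->
  summable P (witness P f0 f1) (witness P g0 g1) ->
  summable P f0 g0 /\ summable P f1 g1 /\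
  summable P (sum P f0 g0) (sum P f1 g1) /\
  sum P (witness P f0 f1) (witness P g0 g1) = witness P (sum P f0 g0) (sum P f1 g1).
Proof.
  intros Hf Hg Hw.
  destruct (witness_spec Hf) as [Ef0 Ef1].
  destruct (witness_spec Hg) as [Eg0 Eg1].
  pose proof (summable_comp_l (pi0 P Y) Hw) as Summable0.
  pose proof (summable_comp_l (pi1 P Y) Hw) as Summable1.
  pose proof (sum_comp_l (pi0 P Y) Hw) as Sum0.
  pose proof (sum_comp_l (pi1 P Y) Hw) as Sum1.
  rewrite Ef0, Eg0 in Summable0, Sum0.
  rewrite Ef1, Eg1 in Summable1, Sum1.
  split; [exact Summable0 |].
  split; [exact Summable1 |].
  split.
  - exists (sum P (witness P f0 f1) (witness P g0 g1)). auto.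
  - symmetry. apply witness_unique; symmetry; assumption.
Qed.
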